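(* Let $S$ be a modal left $E$-monoid, with $e\in E(S)$ and $f\in E$. Then $(e\cdot f)e$ is an idempotent which is a greatest lower bound of $e$ and $f$ in $E(S)$ with respect to $\le_r$ (that is, $(e\cdot f)e\le_r e$, $(e\cdot f)e\le_r f$, and every $g\in E(S)$ with $g\le_r e$ and $g\le_r f$ satisfies $g\le_r (e\cdot f)e$). Moreover, if $s\in S$ satisfies $se=sf=s$, then $s(e\cdot f)e=s$.
   Context: For a semigroup $S$, $E(S)$ is its set of idempotents; for $e,f\in E(S)$, $e\le_r f$ iff $e=ef$ (a quasiorder on $E(S)$). $E\subseteq E(S)$ is right pre-reduced if $e=ef$ and $f=fe$ imply $e=f$ for $e,f\in E$. Let $S$ be a monoid and $1\in E\subseteq E(S)$. $S$ is a modal left $E$-monoid if $E$ is right pre-reduced and (I1') for all $t\in S$, $e\in E$ there is $t\cdot e\in E$ such that for all $s\in S$: $ste=st$ iff $s(t\cdot e)=s$; the (necessarily unique) map $(t,e)\mapsto t\cdot e$ on $S\times E$ is the left $E$-modal operation. *)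

Record Monoid := {
  carrier :> Type;
  mul : carrier -> carrier -> carrier;
  one : carrier;
  mulA : forall x y z, mul x (mul y z) = mul (mul x y) z;
  mul1l : forall x, mul one x = x;
  mul1r : forall x, mul x one = x
}.

Arguments mul {m} _ _.
Arguments one {m}.

Definition idem {S : Monoid} (e : S) : Prop := mul e e = e.

Definition le_r {S : Monoid} (e f : S) : Prop := e = mul e f.

Definition right_pre_reduced {S : Monoid} (E : S -> Prop) : Prop :=
  forall e f, E e -> E f -> e = mul e f -> f = mul f e -> e = f.

(* S is a modal left E-monoid, with left E-modal operation [dot]
   (t . e = dot t e) *)
Definition modal_left_E_monoid (S : Monoid) (E : S -> Prop)
    (dot : S -> S -> S) : Prop :=
  E one /\
  (forall e, E e -> idem e) /\
  right_pre_reduced E /\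
  (forall t e, E e ->
     E (dot t e) /\
     forall s, mul (mul s t) e = mul s t <-> mul s (dot t e) = s).


(* Write d := e . f for an idempotent e and f in E.  Axiom (I1') says that
   s d = s holds exactly when s e f = s e; it is used in both directions:
   - from right to left with s := d (d is idempotent) and s := d e, giving
     (d e) f = d e and (d e) d = d e; associativity and e e = e then make
     d e idempotent and below both e and f;
   - from left to right with any s fixed by e and f on the right, giving
     s d = s and hence s (d e) = s.
   The greatest-lower-bound property is the special case s := g of the
   last fact. *)

Lemma mul_idem_le_r (S : Monoid) (x e : S) : idem e -> le_r (mul x e) e.
Proof.
  intros He. unfold le_r. rewrite <- mulA, He. reflexivity.
Qed.

Section ModalMeet.

Variable S : Monoid.
Variable E : S -> Prop.
Variable dot : S -> S -> S.
Hypothesis HS : modal_left_E_monoid S E dot.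

Lemma dot_idem (t f : S) : E f -> idem (dot t f).
Proof.
  intros Hf. destruct HS as [_ [Hid [_ Hdot]]].
  apply Hid. apply (proj1 (Hdot t f Hf)).
Qed.

Lemma modal_fix (t f s : S) :
  E f -> (mul (mul s t) f = mul s t <-> mul s (dot t f) = s).
Proof.
  intros Hf. destruct HS as [_ [_ [_ Hdot]]].
  apply (proj2 (Hdot t f Hf)).
Qed.

Lemma dot_mul_fixed (t f : S) :
  E f -> mul (mul (dot t f) t) f = mul (dot t f) t.
Proof.
  intros Hf. apply (modal_fix t f _ Hf). apply (dot_idem t f Hf).
Qed.

Lemma dot_mul_le_right (t f : S) : E f -> le_r (mul (dot t f) t) f.
Proof.
  intros Hf. unfold le_r. symmetry. apply (dot_mul_fixed t f Hf).
Qed.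

Lemma fixed_by_dot_mul (t f s : S) :
  E f -> mul s t = s -> mul s f = s -> mul s (mul (dot t f) t) = s.
Proof.
  intros Hf Hst Hsf.
  assert (Hsd : mul s (dot t f) = s).
  { apply (modal_fix t f s Hf). rewrite Hst. exact Hsf. }
  rewrite mulA, Hsd. exact Hst.
Qed.

Section IdempotentE.

Variables e f : S.
Hypothesis He : idem e.
Hypothesis Hf : E f.

Let d := dot e f.

Lemma dot_mul_absorbs : mul (mul d e) d = mul d e.
Proof.
  apply (modal_fix e f _ Hf).
  rewrite <- (mulA _ d e e), He. apply (dot_mul_fixed e f Hf).
Qed.

Lemma dot_mul_idem : idem (mul d e).
Proof.
  unfold idem. rewrite mulA, dot_mul_absorbs, <- mulA, He. reflexivity.
Qed.

End IdempotentE.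

End ModalMeet.

Theorem lemma5p6 (S : Monoid) (E : S -> Prop) (dot : S -> S -> S)
  (HS : modal_left_E_monoid S E dot) (e f : S) (He : idem e) (Hf : E f) :
  idem (mul (dot e f) e) /\
  le_r (mul (dot e f) e) e /\
  le_r (mul (dot e f) e) f /\
  (forall g : S, idem g -> le_r g e -> le_r g f -> le_r g (mul (dot e f) e)) /\
  (forall s : S, mul s e = s -> mul s f = s -> mul s (mul (dot e f) e) = s).
Proof.
  split; [apply (dot_mul_idem S E dot HS e f He Hf)|].
  split; [apply (mul_idem_le_r S (dot e f) e He)|].
  split; [apply (dot_mul_le_right S E dot HS e f Hf)|].
  split.
  - intros g _ Hge Hgf. unfold le_r in *.
    symmetry. apply (fixed_by_dot_mul S E dot HS e f g Hf); symmetry; assumption.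
  - intros s. apply (fixed_by_dot_mul S E dot HS e f s Hf).
Qed.
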